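(* Let $(X,d)$ be a complete metric space and $\{f_{\eta_k}:\eta_k\in B^{[k]},k\in\mathbb{N}\}$ a binary tree of continuous maps $X\to X$. Suppose there is a nonempty compact $C\subseteq X$ with $f_{\eta_k}(C)\subseteq C$ for all finite codes $\eta_k$, that each $f_{\eta_k}$ is Lipschitz with constant $s_{\eta_k}$, and that $\sum_{k=1}^\infty\prod_{i=1}^k s_{\tau_i\eta}<\infty$ for every $\eta\in B^{[\infty]}$. Then the set $$U_{TM}=\bigcup_{\eta\in B^{[\infty]}}\lim_{k\to\infty}f_{\tau_1\eta}\circ\cdots\circ f_{\tau_{k-1}\eta}\circ f_{\tau_k\eta}(x)\subseteq C$$ is well defined (all the limits exist) and is the same set for every $x\in C$.
   Context: $B^{[k]}=\{1,2\}^k$ is the set of binary codes $\eta_k=(i_1\ldots i_k)$ of length $k$, $B^{[\infty]}=\{1,2\}^{\mathbb{N}}$ the set of infinite codes, and $\tau_\ell\eta=(i_1\ldots i_\ell)$ the truncation of $\eta$ to its first $\ell$ symbols. A binary tree of maps assigns to each finite code $\eta_k$ a continuous map $f_{\eta_k}:X\to X$. *)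

From Stdlib Require Import Reals List.
Open Scope R_scope.

(* Binary alphabet {1,2} is represented by [bool]. *)

Definition mopen (M : Metric_Space) (O : Base M -> Prop) : Prop :=
  forall x, O x -> exists r, r > 0 /\ forall y, dist M x y < r -> O y.

Definition mcompact (M : Metric_Space) (C : Base M -> Prop) : Prop :=
  forall (I : Type) (O : I -> Base M -> Prop),
    (forall i, mopen M (O i)) ->
    (forall x, C x -> exists i, O i x) ->
    exists l : list I, forall x, C x -> exists i, In i l /\ O i x.

Definition mcv (M : Metric_Space) (u : nat -> Base M) (z : Base M) : Prop :=
  forall eps, eps > 0 -> exists N, forall n, (n >= N)%nat -> dist M (u n) z < eps.

Definition mcauchy (M : Metric_Space) (u : nat -> Base M) : Prop :=
  forall eps, eps > 0 -> exists N, forall n m, (n >= N)%nat -> (m >= N)%nat ->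
    dist M (u n) (u m) < eps.

Definition mcomplete (M : Metric_Space) : Prop :=
  forall u, mcauchy M u -> exists z, mcv M u z.

Definition mcontinuous (M : Metric_Space) (g : Base M -> Base M) : Prop :=
  forall x eps, eps > 0 -> exists delta, delta > 0 /\
    forall y, dist M x y < delta -> dist M (g x) (g y) < eps.

Definition lipschitz (M : Metric_Space) (g : Base M -> Base M) (s : R) : Prop :=
  0 <= s /\ forall x y, dist M (g x) (g y) <= s * dist M x y.

(* tau_k eta = (i_1 ... i_k): the first k symbols of the infinite code eta
   (eta 0 is i_1). *)
Definition trunc (eta : nat -> bool) (k : nat) : list bool := map eta (seq 0 k).

(* treecomp f eta k x = f_{tau_1 eta} o ... o f_{tau_k eta} (x)  (identity for k = 0). *)
Fixpoint treecomp {X : Type} (f : list bool -> X -> X) (eta : nat -> bool) (k : nat) (x : X) : X :=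
  match k with
  | O => x
  | S k' => treecomp f eta k' (f (trunc eta (S k')) x)
  end.

Fixpoint prodS (s : list bool -> R) (eta : nat -> bool) (k : nat) : R :=
  match k with
  | O => 1
  | S k' => prodS s eta k' * s (trunc eta (S k'))
  end.

Definition U_TM (M : Metric_Space) (f : list bool -> Base M -> Base M) (x : Base M)
  (z : Base M) : Prop :=
  exists eta : nat -> bool, mcv M (fun k => treecomp f eta k x) z.

(* Fix an infinite code eta and write T_k = f_{tau_1 eta} o ... o f_{tau_k eta}.
   Since T_k is a composition of Lipschitz maps, it is Lipschitz with constant
   P_k = prod_{i<=k} s_{tau_i eta}.  For x in the invariant compact set C, whose
   diameter is some D > 0, we get
     d(T_{k+1} x, T_k x) = d(T_k (f x), T_k x) <= D * P_k,
   and the hypothesis that sum_k P_k converges makes (T_k x) a Cauchy sequence;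
   completeness gives the limit.  For x, y in C, d(T_k x, T_k y) <= D * P_k -> 0,
   so both sequences have the same limit: U_TM does not depend on the starting
   point.  Finally, limits of sequences in C stay in C because compact sets are
   closed. *)

From Stdlib Require Import Reals List Lra Lia Classical.
Open Scope R_scope.

Fixpoint psum (b : nat -> R) (n : nat) : R :=
  match n with O => 0 | S n' => psum b n' + b n' end.

(* The hypothesis of the theorem sums the terms from index 1 on; adding the
   zeroth term back gives a Cauchy sequence of partial sums [psum b]. *)
Lemma psum_cauchy (b : nat -> R) (l : R) :
  Un_cv (fun n => sum_f_R0 (fun j => b (S j)) n) l -> Cauchy_crit (psum b).
Proof.
  intros Hl.
  assert (Hpsum : forall n, psum b (S (S n)) = b O + sum_f_R0 (fun j => b (S j)) n).
  { intro n. replace (psum b (S (S n))) with (sum_f_R0 b (S n)).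
    - rewrite decomp_sum; [reflexivity | lia].
    - induction n as [|n IH]; simpl in *; [ring | rewrite IH; ring]. }
  apply CV_Cauchy. exists (b O + l).
  intros eps Heps. destruct (Hl eps Heps) as [N HN]. exists (S (S N)).
  intros n Hn. destruct n as [|[|m]]; try lia.
  unfold Rdist. rewrite Hpsum.
  replace (b O + sum_f_R0 (fun j => b (S j)) m - (b O + l))
    with (sum_f_R0 (fun j => b (S j)) m - l) by ring.
  apply HN. lia.
Qed.

Lemma psum_cauchy_terms (b : nat -> R) :
  Cauchy_crit (psum b) ->
  forall eps, eps > 0 -> exists N, forall k, (k >= N)%nat -> b k < eps.
Proof.
  intros Hb eps Heps. destruct (Hb eps Heps) as [N HN]. exists N.
  intros k Hk. specialize (HN (S k) k ltac:(lia) Hk).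
  unfold Rdist in HN. simpl psum in HN.
  replace (psum b k + b k - psum b k) with (b k) in HN by ring.
  pose proof (Rle_abs (b k)). lra.
Qed.

Section MetricFacts.

Variable M : Metric_Space.

Lemma dist_self (x : Base M) : dist M x x = 0.
Proof. apply dist_refl; reflexivity. Qed.

(* If consecutive steps of [u] are bounded by [D * b k] and the partial sums of
   [b] are Cauchy, then [u] is Cauchy (telescoping the triangle inequality). *)
Lemma cauchy_of_summable_steps (u : nat -> Base M) (b : nat -> R) (D : R) :
  D > 0 -> Cauchy_crit (psum b) ->
  (forall k, dist M (u (S k)) (u k) <= D * b k) -> mcauchy M u.
Proof.
  intros HD Hb Hstep.
  assert (Htele : forall m d,
      dist M (u (m + d)%nat) (u m) <= D * (psum b (m + d) - psum b m)).
  { intros m d; induction d as [|d IH].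
    - rewrite Nat.add_0_r, dist_self. lra.
    - rewrite Nat.add_succ_r. simpl psum.
      pose proof (dist_tri M (u (S (m + d))) (u m) (u (m + d)%nat)).
      pose proof (Hstep (m + d)%nat). lra. }
  intros eps Heps.
  destruct (Hb (eps / D)) as [N HN]; [apply Rdiv_lt_0_compat; lra|].
  exists N.
  assert (Hordered : forall n m, (n >= N)%nat -> (m >= N)%nat -> (m <= n)%nat ->
      dist M (u n) (u m) < eps).
  { intros n m Hn Hm Hmn. replace n with (m + (n - m))%nat by lia.
    eapply Rle_lt_trans; [apply Htele|].
    replace (m + (n - m))%nat with n by lia.
    specialize (HN n m Hn Hm). unfold Rdist in HN.
    apply Rabs_def2 in HN.
    replace eps with (D * (eps / D)) by (field; lra).
    apply Rmult_lt_compat_l; lra. }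
  intros n m Hn Hm. destruct (Nat.le_ge_cases m n).
  - now apply Hordered.
  - rewrite dist_sym. now apply Hordered.
Qed.

Lemma mcv_of_close (u v : nat -> Base M) (z : Base M) :
  mcv M u z ->
  (forall eps, eps > 0 -> exists N, forall k, (k >= N)%nat -> dist M (v k) (u k) < eps) ->
  mcv M v z.
Proof.
  intros Hu Hclose eps Heps.
  destruct (Hu (eps / 2) ltac:(lra)) as [N1 HN1].
  destruct (Hclose (eps / 2) ltac:(lra)) as [N2 HN2].
  exists (max N1 N2). intros k Hk.
  pose proof (HN1 k ltac:(lia)). pose proof (HN2 k ltac:(lia)).
  pose proof (dist_tri M (v k) z (u k)). lra.
Qed.

(* A nonempty compact set has a positive bound on its diameter: cover it by
   unit balls and take a finite subcover. *)
Lemma compact_bounded (C : Base M -> Prop) (x0 : Base M) :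
  C x0 -> mcompact M C ->
  exists D, D > 0 /\ forall y y', C y -> C y' -> dist M y y' <= D.
Proof.
  intros Hx0 HC.
  destruct (HC (Base M) (fun a y => dist M a y < 1)) as [l Hl].
  - intros a y Hy. exists (1 - dist M a y). split; [lra|].
    intros y' Hy'. pose proof (dist_tri M a y' y). lra.
  - intros y _. exists y. rewrite dist_self. lra.
  - set (B := fold_right (fun a acc => dist M a x0 + acc) 0 l).
    assert (HB : forall a, In a l -> dist M a x0 <= B).
    { unfold B; clear Hl; induction l as [|b l IH]; simpl; intros a Ha; [contradiction|].
      assert (Hrest : 0 <= fold_right (fun a acc => dist M a x0 + acc) 0 l).
      { clear IH Ha; induction l; simpl; [lra|]. pose proof (dist_pos M a0 x0); lra. }
      destruct Ha as [<-|Ha]; [lra|].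
      pose proof (IH a Ha). pose proof (dist_pos M b x0). lra. }
    assert (Hnear : forall y, C y -> dist M y x0 < 1 + B).
    { intros y Cy. destruct (Hl y Cy) as [a [Ha Hd]].
      pose proof (HB a Ha). pose proof (dist_tri M y x0 a).
      rewrite (dist_sym M y a) in *. lra. }
    exists (2 * (1 + B) + 1). split.
    + pose proof (Hnear x0 Hx0). pose proof (dist_pos M x0 x0). lra.
    + intros y y' Cy Cy'. pose proof (Hnear y Cy). pose proof (Hnear y' Cy').
      pose proof (dist_tri M y y' x0). rewrite (dist_sym M x0 y') in *. lra.
Qed.

(* A compact set contains the limits of its sequences: otherwise the open sets
   { y | d(y, z) > 1/(n+1) } cover it, and a finite subcover keeps it at
   positive distance from the limit z. *)
Lemma compact_closed (C : Base M -> Prop) (u : nat -> Base M) (z : Base M) :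
  mcompact M C -> (forall k, C (u k)) -> mcv M u z -> C z.
Proof.
  intros HC Hu Hcv. destruct (classic (C z)) as [|Hz]; [assumption|exfalso].
  destruct (HC nat (fun n y => dist M y z > / INR (S n))) as [l Hl].
  - intros n y Hy. exists (dist M y z - / INR (S n)). split; [lra|].
    intros y' Hy'. pose proof (dist_tri M y z y'). lra.
  - intros y Cy.
    assert (Hpos : dist M y z > 0).
    { pose proof (dist_pos M y z). destruct (Req_dec (dist M y z) 0) as [e|e]; [|lra].
      apply dist_refl in e. subst; contradiction. }
    destruct (archimed_cor1 (dist M y z)) as [N [HN1 HN2]]; [lra|].
    destruct N as [|n]; [lia|]. exists n. lra.
  - set (N := fold_right max 0%nat l).
    assert (HN : forall n, In n l -> (n <= N)%nat).
    { unfold N; clear Hl; induction l as [|b l IH]; simpl; intros n Hn; [contradiction|].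
      destruct Hn as [<-|Hn]; [lia|]. pose proof (IH n Hn); lia. }
    assert (Hpos : 0 < / INR (S N)) by (apply Rinv_0_lt_compat, lt_0_INR; lia).
    destruct (Hcv _ Hpos) as [K HK]. specialize (HK K (le_n K)).
    destruct (Hl (u K) (Hu K)) as [n [Hn Hd]].
    assert (Hle : / INR (S N) <= / INR (S n)).
    { apply Rinv_le_contravar; [apply lt_0_INR; lia|].
      apply le_INR. pose proof (HN n Hn); lia. }
    lra.
Qed.

End MetricFacts.

Section TreeCompositions.

Variable M : Metric_Space.
Variable f : list bool -> Base M -> Base M.
Variable s : list bool -> R.
Hypothesis f_lipschitz : forall c, c <> nil -> lipschitz M (f c) (s c).

(* Truncations of positive length are nonempty codes, where the maps of the
   tree are constrained. *)
Lemma trunc_nnil (eta : nat -> bool) (k : nat) : trunc eta (S k) <> nil.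
Proof. unfold trunc; simpl; discriminate. Qed.

Lemma treecomp_invariant (C : Base M -> Prop) :
  (forall c x, c <> nil -> C x -> C (f c x)) ->
  forall eta k x, C x -> C (treecomp f eta k x).
Proof.
  intros HfC eta k; induction k as [|k IH]; intros x Cx; simpl; [assumption|].
  apply IH, HfC; [apply trunc_nnil | assumption].
Qed.

Lemma prodS_nonneg (eta : nat -> bool) (k : nat) : 0 <= prodS s eta k.
Proof.
  induction k as [|k IH]; simpl; [lra|].
  apply Rmult_le_pos; [assumption|]. apply (proj1 (f_lipschitz _ (trunc_nnil eta k))).
Qed.

Lemma treecomp_lipschitz (eta : nat -> bool) (k : nat) (u v : Base M) :
  dist M (treecomp f eta k u) (treecomp f eta k v) <= prodS s eta k * dist M u v.
Proof.
  revert u v; induction k as [|k IH]; intros u v; simpl; [lra|].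
  eapply Rle_trans; [apply IH|]. rewrite Rmult_assoc.
  apply Rmult_le_compat_l; [apply prodS_nonneg|].
  apply (proj2 (f_lipschitz _ (trunc_nnil eta k))).
Qed.

Lemma treecomp_close (C : Base M -> Prop) (D : R) :
  (forall y y', C y -> C y' -> dist M y y' <= D) ->
  forall eta k x y, C x -> C y ->
  dist M (treecomp f eta k x) (treecomp f eta k y) <= D * prodS s eta k.
Proof.
  intros HD eta k x y Cx Cy.
  eapply Rle_trans; [apply treecomp_lipschitz|]. rewrite Rmult_comm.
  apply Rmult_le_compat_r; [apply prodS_nonneg | now apply HD].
Qed.

End TreeCompositions.

Theorem mainTheorem2 (M : Metric_Space) (f : list bool -> Base M -> Base M)
  (s : list bool -> R) (C : Base M -> Prop) :
  mcomplete M ->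
  (forall c, c <> nil -> mcontinuous M (f c)) ->
  (exists x0, C x0) ->
  mcompact M C ->
  (forall c x, c <> nil -> C x -> C (f c x)) ->
  (forall c, c <> nil -> lipschitz M (f c) (s c)) ->
  (forall eta : nat -> bool, exists l,
      Un_cv (fun n => sum_f_R0 (fun j => prodS s eta (S j)) n) l) ->
  (forall x, C x -> forall eta : nat -> bool, exists z, mcv M (fun k => treecomp f eta k x) z)
  /\ (forall x y, C x -> C y -> forall z, U_TM M f x z <-> U_TM M f y z)
  /\ (forall x, C x -> forall z, U_TM M f x z -> C z).
Proof.
  intros Hcomplete _ [x0 Hx0] HC HfC Hlip Hsum.
  destruct (compact_bounded M C x0 Hx0 HC) as [D [HD Hdiam]].
  assert (Hcauchy : forall eta, Cauchy_crit (psum (prodS s eta))).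
  { intro eta. destruct (Hsum eta) as [l Hl]. exact (psum_cauchy _ l Hl). }
  assert (Hmove : forall eta x y z, C x -> C y ->
      mcv M (fun k => treecomp f eta k x) z -> mcv M (fun k => treecomp f eta k y) z).
  { intros eta x y z Cx Cy Hx. apply (mcv_of_close M _ _ z Hx).
    intros eps Heps.
    destruct (psum_cauchy_terms _ (Hcauchy eta) (eps / D)) as [N HN];
      [apply Rdiv_lt_0_compat; lra|].
    exists N. intros k Hk.
    eapply Rle_lt_trans; [apply (treecomp_close M f s Hlip C D Hdiam); assumption|].
    replace eps with (D * (eps / D)) by (field; lra).
    apply Rmult_lt_compat_l; [lra | now apply HN]. }
  split; [|split].
  - intros x Cx eta. apply Hcomplete.
    apply (cauchy_of_summable_steps M _ (prodS s eta) D HD (Hcauchy eta)).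
    intro k; simpl. apply (treecomp_close M f s Hlip C D Hdiam); [apply HfC; [apply trunc_nnil|] |]; assumption.
  - intros x y Cx Cy z; split; intros [eta Hz]; exists eta.
    + exact (Hmove eta x y z Cx Cy Hz).
    + exact (Hmove eta y x z Cy Cx Hz).
  - intros x Cx z [eta Hz]. refine (compact_closed M C _ z HC _ Hz).
    intro k. now apply (treecomp_invariant M f C HfC).
Qed.
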